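(* Let $R$ be a Noetherian commutative ring of prime characteristic $p>0$ such that for each minimal prime $P$ of $R$, the domain $R/P$ has a module-finite extension domain $S\supseteq R/P$ that is F-regular. Then tight closure commutes with localization in $R$.
   Context: All rings are commutative and Noetherian of prime characteristic $p>0$. For an ideal $I$ of a ring $A$ and $q=p^e$, $I^{[q]}$ denotes the ideal generated by $\{x^q : x\in I\}$. The tight closure $I^*$ of $I$ is the set of $z\in A$ for which there exists $c\in A$, not in any minimal prime of $A$, with $c z^q\in I^{[q]}$ for all $q=p^e \gg 0$. A ring $A$ is F-regular if every ideal of every localization $A[U^{-1}]$ ($U$ a multiplicative system of $A$) equals its own tight closure. We say tight closure commutes with localization in $A$ if for every ideal $I$ of $A$ and every multiplicative system $U\subseteq A$, one has $I^*A[U^{-1}] = (IA[U^{-1}])^*$. *)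

(* Rings are MathComp commutative rings; ideals are
   predicates R -> Prop. Localizations and quotients are given by their
   standard universal characterizations (ring morphisms). *)
From HB Require Import structures.
From mathcomp Require Import all_boot all_algebra.
Set Implicit Arguments. Unset Strict Implicit. Unset Printing Implicit Defensive.
Import GRing.Theory.
Local Open Scope ring_scope.

Section Ideals.
Variable A : comPzRingType.

Definition is_ideal (I : A -> Prop) : Prop :=
  [/\ I 0, (forall x y, I x -> I y -> I (x + y)) &
      (forall r x, I x -> I (r * x))].

Definition gen_ideal (G : A -> Prop) : A -> Prop := fun z =>
  exists l : seq (A * A), (forall rg, rg \in l -> G rg.2) /\
     z = \sum_(rg <- l) rg.1 * rg.2.

Definition is_prime (P : A -> Prop) : Prop :=
  [/\ is_ideal P, ~ P 1 & (forall a b, P (a * b) -> P a \/ P b)].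

Definition is_minimal_prime (P : A -> Prop) : Prop :=
  is_prime P /\ (forall Q, is_prime Q -> (forall x, Q x -> P x) -> forall x, P x -> Q x).

Definition mult_system (U : A -> Prop) : Prop :=
  U 1 /\ (forall u v, U u -> U v -> U (u * v)).

Definition frob_power (I : A -> Prop) (q : nat) : A -> Prop :=
  gen_ideal (fun y => exists x, I x /\ y = x ^+ q).

Definition tight_closure (p : nat) (I : A -> Prop) : A -> Prop := fun z =>
  exists c : A, (forall P, is_minimal_prime P -> ~ P c) /\
    exists e0 : nat, forall e : nat, (e0 <= e)%N ->
      frob_power I (p ^ e) (c * z ^+ (p ^ e)).

End Ideals.

Definition is_noetherian (A : comPzRingType) : Prop :=
  forall I : A -> Prop, is_ideal I ->
    exists s : seq A, forall x, I x <-> gen_ideal (fun g => g \in s) x.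

Definition is_localization (A B : comPzRingType) (U : A -> Prop)
    (f : {rmorphism A -> B}) : Prop :=
  [/\ (forall u, U u -> exists v, f u * v = 1),
      (forall b, exists a u, U u /\ b * f u = f a) &
      (forall a, f a = 0 -> exists u, U u /\ u * a = 0)].

Definition ext_ideal (A B : comPzRingType) (f : A -> B) (I : A -> Prop) : B -> Prop :=
  gen_ideal (fun y => exists x, I x /\ y = f x).

Definition F_regular (p : nat) (A : comPzRingType) : Prop :=
  forall (B : comPzRingType) (U : A -> Prop) (f : {rmorphism A -> B}),
    mult_system U -> is_localization U f ->
    forall J : B -> Prop, is_ideal J ->
      forall z, tight_closure p J z <-> J z.

Definition tc_commutes_with_localization (p : nat) (A : comPzRingType) : Prop :=
  forall I : A -> Prop, is_ideal I ->
  forall (U : A -> Prop) (B : comPzRingType) (f : {rmorphism A -> B}),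
    mult_system U -> is_localization U f ->
    forall z, ext_ideal f (tight_closure p I) z <-> tight_closure p (ext_ideal f I) z.

Definition is_quotient_by (A B : comPzRingType) (P : A -> Prop)
    (pi : {rmorphism A -> B}) : Prop :=
  (forall b, exists a, pi a = b) /\ (forall a, pi a = 0 <-> P a).

Definition module_finite (D S : comPzRingType) (j : D -> S) : Prop :=
  exists gens : seq S, forall x : S, exists cs : seq D,
    x = \sum_(i < size gens) j (nth 0 cs i) * nth 0 gens i.

From HB Require Import structures.
From mathcomp Require Import all_boot all_algebra.
From Stdlib Require Import Classical ClassicalEpsilon FunctionalExtensionality PropExtensionality.
From Stdlib Require List.
From mathcomp Require Import ring.
Set Implicit Arguments. Unset Strict Implicit. Unset Printing Implicit Defensive.
Import GRing.Theory.
Local Open Scope ring_scope.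

(* The extension of [I^*] to [R_U] lies in [(I R_U)^*] because minimal primes of [R_U]
   contract to minimal primes of [R].  Conversely let [z = a / u0] lie in [(I R_U)^*].
   Clearing denominators gives [c] outside every minimal prime disjoint from [U] and, for
   large [q], elements of [U] multiplying [c a^q] into [I^[q]].  Fix a minimal prime [P]
   and the module-finite F-regular extension [S] of [R/P].  If [P] meets [U], some [u a]
   lies in [P].  Otherwise, in the localization of [S] at the image of [U], the image of
   [a] is in the tight closure of [I S], hence in [I S] itself, so some [u a] is in [I S].
   A D-linear map [S -> R/P] not vanishing at 1 brings this down: [c_P (u a)^q] lies in
   [I^[q] + P] for every [q].  Finally [R] has finitely many minimal primes, with nilpotent
   intersection; elements separating them glue the [c_P] into a single [c] in no minimal
   prime with [c (u a)^q] in [I^[q]] for all large [q].  Thus [u a] is in [I^*] and [z] is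
   in [I^* R_U]. *)

Definition classic_bool (P : Prop) : bool :=
  if excluded_middle_informative P then true else false.

Lemma classic_boolP (P : Prop) : reflect P (classic_bool P).
Proof. by rewrite /classic_bool; case: excluded_middle_informative => /= h; constructor. Qed.

Section Ideals.
Variable A : comPzRingType.
Implicit Types (G I J P : A -> Prop) (r x y : A).

Lemma is_ideal0 J : is_ideal J -> J 0.
Proof. by case. Qed.

Lemma is_idealD J x y : is_ideal J -> J x -> J y -> J (x + y).
Proof. by case=> _ JD _; apply: JD. Qed.

Lemma is_idealMl J r x : is_ideal J -> J x -> J (r * x).
Proof. by case=> _ _ JM; apply: JM. Qed.

Lemma is_idealMr J x r : is_ideal J -> J x -> J (x * r).
Proof. by move=> JI Jx; rewrite mulrC; apply: is_idealMl. Qed.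

Lemma is_idealB J x y : is_ideal J -> J x -> J y -> J (x - y).
Proof. by move=> JI Jx Jy; apply: is_idealD => //; rewrite -mulN1r; apply: is_idealMl. Qed.

Lemma is_ideal_sum J (I : eqType) (l : seq I) (Q : pred I) (F : I -> A) :
  is_ideal J -> (forall i, i \in l -> Q i -> J (F i)) -> J (\sum_(i <- l | Q i) F i).
Proof.
move=> JI JF; rewrite big_seq_cond; apply: big_ind => [|a b|i /andP[]].
- exact: is_ideal0.
- exact: is_idealD.
- exact: JF.
Qed.

Lemma gen_ideal_ideal G : is_ideal (gen_ideal G).
Proof.
split.
- by exists [::]; split => //; rewrite big_nil.
- move=> x y [l1 [G1 ->]] [l2 [G2 ->]]; exists (l1 ++ l2); split; last by rewrite big_cat.
  by move=> rg; rewrite mem_cat => /orP[/G1|/G2].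
- move=> r x [l [Gl ->]]; exists (map (fun rg => (r * rg.1, rg.2)) l); split.
  + by move=> rg /mapP[rg' /Gl ? ->].
  + by rewrite big_map mulr_sumr; apply: eq_bigr => rg _; rewrite mulrA.
Qed.

Lemma gen_ideal_gen G x : G x -> gen_ideal G x.
Proof.
move=> Gx; exists [:: (1, x)]; split; first by move=> rg; rewrite inE => /eqP ->.
by rewrite big_seq1 mul1r.
Qed.

Lemma gen_ideal_min G J z : is_ideal J -> (forall x, G x -> J x) -> gen_ideal G z -> J z.
Proof.
move=> JI GJ [l [Gl ->]]; apply: is_ideal_sum => // rg /Gl /GJ Jrg _; exact: is_idealMl.
Qed.

Lemma gen_ideal_mono G G' z : (forall x, G x -> G' x) -> gen_ideal G z -> gen_ideal G' z.
Proof.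
by move=> GG'; apply: gen_ideal_min => [|x /GG']; [apply: gen_ideal_ideal|apply: gen_ideal_gen].
Qed.

Lemma frob_power_ideal I q : is_ideal (frob_power I q).
Proof. exact: gen_ideal_ideal. Qed.

Lemma frob_power_gen I q x : I x -> frob_power I q (x ^+ q).
Proof. by move=> Ix; apply: gen_ideal_gen; exists x. Qed.

Lemma prime_is_ideal P : is_prime P -> is_ideal P.
Proof. by case. Qed.

Lemma prime_notinM P x y : is_prime P -> ~ P x -> ~ P y -> ~ P (x * y).
Proof. by move=> [_ _ Pp] Px Py /Pp []. Qed.

Lemma prime_expr P x n : is_prime P -> P (x ^+ n) -> P x.
Proof.
move=> [_ P1 Pp]; elim: n => [|n IHn]; first by rewrite expr0.
by rewrite exprS => /Pp [].
Qed.

End Ideals.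

Lemma minimal_prime_eq0 (B : comNzRingType) (Q : B -> Prop) x :
  (forall a b : B, a * b = 0 -> a = 0 \/ b = 0) -> is_minimal_prime Q -> Q x -> x = 0.
Proof.
move=> domB [[QI _ _] Qmin] Qx.
have prime0 : is_prime (fun y : B => y = 0).
  by split; [split => [|_ _ -> ->|r _ ->]|exact/eqP/oner_neq0|]; rewrite ?addr0 ?mulr0.
by apply: (Qmin _ prime0) => // _ ->; apply: is_ideal0.
Qed.

Section Morphisms.
Variables (A B : comPzRingType) (f : {rmorphism A -> B}).

Lemma ext_ideal_ideal I : is_ideal (ext_ideal f I).
Proof. exact: gen_ideal_ideal. Qed.

Lemma ext_ideal_img I x : I x -> ext_ideal f I (f x).
Proof. by move=> Ix; apply: gen_ideal_gen; exists x. Qed.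

Lemma gen_ideal_map G G' z : (forall x, G x -> G' (f x)) ->
  gen_ideal G z -> gen_ideal G' (f z).
Proof.
move=> GG' [l [Gl ->]]; rewrite rmorph_sum; apply: is_ideal_sum; first exact: gen_ideal_ideal.
move=> rg /Gl Grg _; rewrite rmorphM; apply: is_idealMl; first exact: gen_ideal_ideal.
exact/gen_ideal_gen/GG'.
Qed.

Lemma frob_power_map I q z : frob_power I q z -> frob_power (ext_ideal f I) q (f z).
Proof.
apply: gen_ideal_map => _ [y [Iy ->]]; exists (f y).
by rewrite rmorphXn; split => //; apply: ext_ideal_img.
Qed.

Lemma prime_comap Q : is_prime Q -> is_prime (fun x => Q (f x)).
Proof.
move=> [[Q0 QD QM] Q1 Qp]; split; rewrite ?rmorph1 //.
- split; first by rewrite rmorph0.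
  + by move=> x y Qx Qy; rewrite rmorphD; apply: QD.
  + by move=> r x Qx; rewrite rmorphM; apply: QM.
- by move=> a b; rewrite rmorphM; apply: Qp.
Qed.

End Morphisms.

Section Frobenius.
Variables (A : comNzRingType) (p : nat).
Hypothesis pA : p \in [pchar A].

Lemma pchar_nat_expn e : [pchar A].-nat (p ^ e)%N.
Proof.
rewrite pnatX (eq_pnat _ (pcharf_eq pA)) pnat_id ?orbT //; exact: pcharf_prime pA.
Qed.

Lemma frobD e (x y : A) : (x + y) ^+ (p ^ e) = x ^+ (p ^ e) + y ^+ (p ^ e).
Proof. exact: exprDn_pchar (pchar_nat_expn e). Qed.

Lemma frob_sum e (T : Type) (l : seq T) (F : T -> A) :
  (\sum_(i <- l) F i) ^+ (p ^ e) = \sum_(i <- l) F i ^+ (p ^ e).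
Proof.
elim: l => [|i l IHl]; last by rewrite !big_cons frobD IHl.
by rewrite !big_nil expr0n expn_eq0 (gtn_eqF (prime_gt0 (pcharf_prime pA))).
Qed.

Lemma gen_ideal_frob e (G : A -> Prop) x : gen_ideal G x ->
  gen_ideal (fun y => exists g, G g /\ y = g ^+ (p ^ e)) (x ^+ (p ^ e)).
Proof.
move=> [l [Gl ->]]; rewrite frob_sum; apply: is_ideal_sum; first exact: gen_ideal_ideal.
move=> rg /Gl Grg _; rewrite exprMn; apply: is_idealMl; first exact: gen_ideal_ideal.
by apply: gen_ideal_gen; exists rg.2.
Qed.

Lemma frob_power_frob e k (I : A -> Prop) x : frob_power I (p ^ e) x ->
  frob_power I (p ^ (e + k)) (x ^+ (p ^ k)).
Proof.
move=> /(gen_ideal_frob k); apply: gen_ideal_mono => _ [_ [[z [Iz ->]] ->]].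
by exists z; rewrite -exprM -expnD.
Qed.

End Frobenius.

Section ProductOfIdeals.
Variable A : comPzRingType.
Implicit Types (Ps : seq (A -> Prop)) (J : A -> Prop).

(* [prod_sub [:: P_1; ...; P_n] J] says that the ideal product P_1 ... P_n lies in J. *)
Fixpoint prod_sub Ps J : Prop :=
  if Ps is P :: Ps' then forall x, P x -> prod_sub Ps' (fun y => J (x * y)) else J 1.

Lemma prod_sub_mono Ps J J' : (forall y, J y -> J' y) -> prod_sub Ps J -> prod_sub Ps J'.
Proof.
elim: Ps J J' => [|P Ps IHPs] J J' JJ' /=; first exact: JJ'.
by move=> PsJ x Px; apply: IHPs (PsJ x Px) => y; apply: JJ'.
Qed.

Lemma prod_sub_cat Ps1 Ps2 J J1 J2 :
  prod_sub Ps1 J1 -> prod_sub Ps2 J2 -> (forall a b, J1 a -> J2 b -> J (a * b)) ->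
  prod_sub (Ps1 ++ Ps2) J.
Proof.
elim: Ps1 J J1 => [|P Ps1 IHPs] J J1 /= Ps1J1 Ps2J2 J12.
  by apply: prod_sub_mono Ps2J2 => b J2b; rewrite -[b]mul1r; apply: J12.
move=> x Px; apply: (IHPs _ (fun y => J1 (x * y)) (Ps1J1 x Px) Ps2J2) => a b J1a J2b.
by rewrite mulrA; apply: J12.
Qed.

Lemma prod_sub_prime Ps J Q : is_prime Q -> prod_sub Ps J ->
  (forall y, J y -> Q y) -> exists2 P, List.In P Ps & forall x, P x -> Q x.
Proof.
move=> [_ Q1 Qp]; elim: Ps J => [|P Ps IHPs] J /= PsJ JQ; first by case: Q1; apply: JQ.
have [PQ|] := classic (forall x, P x -> Q x); first by exists P; first left.
move=> /not_all_ex_not [x /(imply_to_and (P x)) [Px nQx]].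
have [P' P'Ps P'Q] : exists2 P', List.In P' Ps & forall y, P' y -> Q y.
  by apply: IHPs (PsJ x Px) _ => y /JQ /Qp [].
by exists P'; first right.
Qed.

Lemma prod_sub_expr Ps J y : prod_sub Ps J -> (forall P, List.In P Ps -> P y) ->
  J (y ^+ size Ps).
Proof.
elim: Ps J => [|P Ps IHPs] J /= PsJ Psy; first by rewrite expr0.
by rewrite exprS; apply: IHPs (PsJ y (Psy P (or_introl erefl))) _ => P' P'Ps; apply: Psy; right.
Qed.

Definition adjoin J c : A -> Prop := fun y => exists j r, J j /\ y = j + r * c.

Lemma adjoin_ideal J c : is_ideal J -> is_ideal (adjoin J c).
Proof.
move=> JI; split.
- by exists 0, 0; rewrite mul0r addr0; split => //; apply: is_ideal0.
- move=> _ _ [j1 [r1 [J1 ->]]] [j2 [r2 [J2 ->]]]; exists (j1 + j2), (r1 + r2).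
  by rewrite mulrDl addrACA; split => //; apply: is_idealD.
- move=> r _ [j [s [Jj ->]]]; exists (r * j), (r * s).
  by rewrite mulrDr mulrA; split => //; apply: is_idealMl.
Qed.

Lemma adjoin_sub J c x : is_ideal J -> J x -> adjoin J c x.
Proof. by move=> JI Jx; exists x, 0; rewrite mul0r addr0. Qed.

Lemma adjoin_gen J c : is_ideal J -> adjoin J c c.
Proof. by move=> JI; exists 0, 1; rewrite add0r mul1r; split => //; apply: is_ideal0. Qed.

Lemma adjoinM J a b x y : is_ideal J -> J (a * b) ->
  adjoin J a x -> adjoin J b y -> J (x * y).
Proof.
move=> JI Jab [j1 [r1 [J1 ->]]] [j2 [r2 [J2 ->]]].
rewrite mulrDl; apply: is_idealD => //; first exact: is_idealMr.
rewrite mulrDr; apply: is_idealD => //; first exact: is_idealMl.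
by rewrite mulrACA; apply: is_idealMl.
Qed.

End ProductOfIdeals.

Section Noetherian.
Variable A : comPzRingType.
Hypothesis noethA : is_noetherian A.

Lemma noetherian_chain_stationary (chain : nat -> A -> Prop) :
  (forall n, is_ideal (chain n)) -> (forall n x, chain n x -> chain n.+1 x) ->
  exists N, forall n x, chain n x -> chain N x.
Proof.
move=> chainI chainS.
have chain_mono n m x : (n <= m)%N -> chain n x -> chain m x.
  move=> /subnK <-; elim: (m - n)%N => [|k IHk] // xn; rewrite addSn; exact/chainS/IHk.
pose U x := exists n, chain n x.
have UI : is_ideal U.
  split; first by exists 0%N; apply: is_ideal0.
  - move=> x y [n xn] [m ym]; exists (maxn n m); apply: is_idealD => //.
      by apply: chain_mono xn; rewrite leq_maxl.
    by apply: chain_mono ym; rewrite leq_maxr.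
  - by move=> r x [n xn]; exists n; apply: is_idealMl.
have [s sgen] := noethA UI.
have [N sN] : exists N, forall g, g \in s -> chain N g.
  have : forall g, g \in s -> U g by move=> g gs; apply/sgen/gen_ideal_gen.
  elim: s {sgen} => [|g s IHs] sU; first by exists 0%N.
  have [N sN] := IHs (fun g' g's => sU g' (mem_behead (s := g :: s) g's)).
  have [n gn] := sU g (mem_head _ _).
  exists (maxn N n) => g'; rewrite inE => /orP[/eqP->|/sN g'N].
    by apply: chain_mono gn; rewrite leq_maxr.
  by apply: chain_mono g'N; rewrite leq_maxl.
exists N => n x xn; have /sgen : U x by exists n.
by apply: gen_ideal_min => // g /sN.
Qed.

Lemma noetherian_maximal (F : (A -> Prop) -> Prop) J0 :
  F J0 -> (forall J, F J -> is_ideal J) ->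
  exists J, F J /\ forall J', F J' -> (forall x, J x -> J' x) -> forall x, J' x -> J x.
Proof.
move=> FJ0 FI; apply: NNPP => nomax.
have grow (J : {J | F J}) : exists J' : {J | F J},
    (forall x, sval J x -> sval J' x) /\ exists x, sval J' x /\ ~ sval J x.
  case: J => J FJ; apply: NNPP => nogrow; apply: nomax; exists J; split => // J' FJ' JJ' x J'x.
  by apply: NNPP => nJx; apply: nogrow; exists (exist _ J' FJ'); split => //; exists x.
pose next J := sval (constructive_indefinite_description _ (grow J)).
have nextP J := svalP (constructive_indefinite_description _ (grow J)).
pose chain n := sval (iter n next (exist _ J0 FJ0)).
have chainI n : is_ideal (chain n) by apply: FI; apply: svalP.
have chainS n x : chain n x -> chain n.+1 x.
  by rewrite /chain iterS; case: (nextP (iter n next (exist _ J0 FJ0))) => + _; apply.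
have [N chainN] := noetherian_chain_stationary chainI chainS.
have [_ [x [xN1 nxN]]] := nextP (iter N next (exist _ J0 FJ0)).
by apply: nxN; apply: (chainN N.+1); rewrite /chain iterS.
Qed.

(* A maximal ideal containing no product of primes would itself be prime. *)
Lemma noetherian_prime_product_sub J0 : is_ideal J0 ->
  exists Ps : seq (A -> Prop), (forall P, List.In P Ps -> is_prime P) /\ prod_sub Ps J0.
Proof.
move=> J0I; apply: NNPP => noPs.
pose F (J : A -> Prop) :=
  is_ideal J /\ ~ exists Ps, (forall P, List.In P Ps -> is_prime P) /\ prod_sub Ps J.
have [J [[JI noPsJ] Jmax]] := noetherian_maximal (F := F) (conj J0I noPs) (fun J FJ => proj1 FJ).
have adjoinPs c : ~ J c ->
    exists Ps, (forall P, List.In P Ps -> is_prime P) /\ prod_sub Ps (adjoin J c).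
  move=> nJc; apply: NNPP => noPsc; apply: nJc.
  exact: Jmax (conj (adjoin_ideal c JI) noPsc) (fun x => adjoin_sub c JI) c (adjoin_gen c JI).
have [a [b [Jab [nJa nJb]]]] : exists a b, J (a * b) /\ ~ J a /\ ~ J b.
  apply: NNPP => Jprime; apply: (noPsJ); exists [:: J]; split; last first.
    by move=> x Jx /=; rewrite mulr1.
  move=> _ [<-|[]]; split => // [J1|a b Jab]; first by apply: (noPsJ); exists [::].
  apply: NNPP => nJab; apply: Jprime; exists a, b.
  by split => //; split => Jx; apply: nJab; [left|right].
have [Psa [Psa_prime Psa_sub]] := adjoinPs a nJa.
have [Psb [Psb_prime Psb_sub]] := adjoinPs b nJb.
apply: noPsJ; exists (Psa ++ Psb); split.
  by move=> P /(List.in_app_or Psa Psb P) [/Psa_prime|/Psb_prime].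
by apply: prod_sub_cat Psa_sub Psb_sub _ => x y; apply: adjoinM.
Qed.

End Noetherian.

Lemma In_minimal_below (T : Type) (le : T -> T -> Prop) (l : list T) x :
  (forall a, le a a) -> (forall a b c, le a b -> le b c -> le a c) -> List.In x l ->
  exists y, [/\ List.In y l, le y x & forall z, List.In z l -> le z y -> le y z].
Proof.
move=> refl trans; elim: l x => [|a l IHl] x //= xl.
have below_a : exists y, [/\ a = y \/ List.In y l, le y a &
    forall z, a = z \/ List.In z l -> le z y -> le y z].
  have [[z zl za]|noz] := classic (exists2 z, List.In z l & le z a).
    have [y [yl yz ymin]] := IHl z zl; have ya := trans _ _ _ yz za.
    by exists y; split=> [|//|w [<-|wl] wy]; [right|exact: ya|exact: ymin].
  exists a; split=> [|//|w [<-|wl] wa //]; [by left|by case: noz; exists w].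
case: xl => [<-|xl]; first exact: below_a.
have [y [yl yx ymin]] := IHl x xl.
have [ay|nay] := classic (le a y).
  have [y' [y'l y'a y'min]] := below_a.
  by exists y'; split=> //; apply: trans _ _ _ y'a (trans _ _ _ ay yx).
by exists y; split=> [|//|w [<-|wl] wy]; [right|case: nay|apply: ymin].
Qed.

Definition subp (A : Type) (P Q : A -> Prop) := forall x, P x -> Q x.

Section MinimalPrimes.
Variable A : comPzRingType.
Implicit Types P Q : A -> Prop.
Variable Ps : seq (A -> Prop).
Hypothesis Ps_prime : forall P, List.In P Ps -> is_prime P.
Hypothesis Ps_nil : prod_sub Ps (fun y => y = 0).

Lemma prime_above_member Q : is_prime Q -> exists2 P, List.In P Ps & subp P Q.
Proof. by move=> Qprime; apply: prod_sub_prime Ps_nil _ => // y ->; case: Qprime => [[]]. Qed.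

Lemma prime_above_minimal Q : is_prime Q -> exists P, is_minimal_prime P /\ subp P Q.
Proof.
move=> Qprime; have [k kPs kQ] := prime_above_member Qprime.
have subp_trans P1 P2 P3 : subp P1 P2 -> subp P2 P3 -> subp P1 P3 by move=> h12 h23 x /h12 /h23.
have [P [PPs Pk Pmin]] := In_minimal_below (fun _ _ => id) subp_trans kPs.
exists P; split=> [|x /Pk /kQ //]; split; first exact: Ps_prime.
move=> Q' Q'prime Q'P; have [k' k'Ps k'Q'] := prime_above_member Q'prime.
have k'P : subp k' P by move=> x /k'Q' /Q'P.
by move=> x /(Pmin k' k'Ps k'P) /k'Q'.
Qed.

Lemma minimal_prime_member P : is_minimal_prime P -> List.In P Ps.
Proof.
move=> [Pprime Pmin]; have [k kPs kP] := prime_above_member Pprime.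
suff -> : P = k by [].
apply: functional_extensionality => x; apply: propositional_extensionality.
by split=> [|/kP //]; apply: (Pmin k (Ps_prime kPs) kP).
Qed.

Lemma minimal_primes_nil y : (forall P, is_minimal_prime P -> P y) -> y ^+ size Ps = 0.
Proof.
move=> ymin; apply: prod_sub_expr Ps_nil _ => k /Ps_prime kprime.
by have [P [/ymin Py /(_ y Py)]] := prime_above_minimal kprime.
Qed.

End MinimalPrimes.

Lemma noetherian_minimal_primes (A : comPzRingType) : is_noetherian A ->
  exists n (M : 'I_n -> A -> Prop), [/\ injective M, (forall i, is_minimal_prime (M i)),
    (forall P, is_minimal_prime P -> exists i, P = M i) &
    exists m, forall y, (forall i, M i y) -> y ^+ m = 0].
Proof.
move=> noethA; have zeroI : is_ideal (fun y : A => y = 0).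
  by split=> [|_ _ -> ->|r _ ->]; rewrite ?addr0 ?mulr0.
have [Ps [Ps_prime Ps_nil]] := noetherian_prime_product_sub noethA zeroI.
pose L := List.nodup (fun P Q : A -> Prop => excluded_middle_informative (P = Q))
  (List.filter (fun P => classic_bool (is_minimal_prime P)) Ps).
have LP P : List.In P L <-> is_minimal_prime P.
  rewrite List.nodup_In List.filter_In; split=> [[_ /classic_boolP //]|Pmin].
  by split; [apply: minimal_prime_member Pmin|apply/classic_boolP].
pose M (i : 'I_(List.length L)) := List.nth i L (fun _ => False).
exists (List.length L), M; split.
- move=> i j Mij; apply: val_inj.
  by apply: (List.NoDup_nth L _).1 Mij; [apply: List.NoDup_nodup|apply/ltP|apply/ltP].
- by move=> i; apply/LP/List.nth_In/ltP.
- move=> P /LP /(List.In_nth _ _ (fun _ => False)) [k [/ltP kL <-]].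
  by exists (Ordinal kL).
- exists (size Ps) => y yM; apply: minimal_primes_nil Ps_prime Ps_nil _ _.
  move=> P /LP /(List.In_nth _ _ (fun _ => False)) [k [/ltP kL <-]].
  exact: (yM (Ordinal kL)).
Qed.

Section Localization.
Variables (A B : comPzRingType) (U : A -> Prop) (f : {rmorphism A -> B}).
Hypothesis U_mult : mult_system U.
Hypothesis f_loc : is_localization U f.

Lemma loc_unit u : U u -> exists v, f u * v = 1.
Proof. by case: f_loc => unit _ _; apply: unit. Qed.

Lemma loc_frac b : exists a u, U u /\ b * f u = f a.
Proof. by case: f_loc => _ frac _; apply: frac. Qed.

Lemma loc_eq a a' : f a = f a' -> exists u, U u /\ u * a = u * a'.
Proof.
move=> faa'; case: f_loc => _ _ ker.
have [u [Uu uaa']] : exists u, U u /\ u * (a - a') = 0 by apply: ker; rewrite rmorphB faa' subrr.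
by exists u; split => //; apply/eqP; rewrite -subr_eq0 -mulrBr uaa'.
Qed.

Lemma loc_prime_unit (Q : B -> Prop) u : is_prime Q -> U u -> ~ Q (f u).
Proof.
move=> [QI Q1 _] Uu Qu; have [v uv] := loc_unit Uu; apply: Q1.
by rewrite -uv; apply: is_idealMr.
Qed.

(* The fractions [a / u] with [a] in [J]: the extended ideal, described without sums. *)
Definition loc_ideal (J : A -> Prop) (b : B) := exists u a, [/\ U u, J a & b * f u = f a].

Lemma loc_ideal_ideal J : is_ideal J -> is_ideal (loc_ideal J).
Proof.
move=> JI; case: U_mult => U1 UM; split.
- by exists 1, 0; rewrite !rmorph0 mul0r; split => //; apply: is_ideal0.
- move=> x y [u1 [a1 [Uu1 Ja1 xu1]]] [u2 [a2 [Uu2 Ja2 yu2]]].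
  exists (u1 * u2), (a1 * u2 + a2 * u1); split; first exact: UM.
    by apply: (is_idealD JI); apply: (is_idealMr _ JI).
  by rewrite rmorphD !rmorphM -xu1 -yu2; ring.
- move=> r x [u [a [Uu Ja xu]]]; have [a' [u' [Uu' ru']]] := loc_frac r.
  exists (u' * u), (a' * a); split; first exact: UM.
    exact: is_idealMl.
  by rewrite !rmorphM -xu -ru' mulrACA.
Qed.

Lemma ext_idealE_loc J b : is_ideal J -> ext_ideal f J b <-> loc_ideal J b.
Proof.
move=> JI; split.
  apply: gen_ideal_min; first exact: loc_ideal_ideal.
  move=> _ [x [Jx ->]]; exists 1, x; rewrite rmorph1 mulr1; split => //; by case: U_mult.
move=> [u [a [Uu Ja bu]]]; have [v uv] := loc_unit Uu.
have -> : b = v * f a by rewrite -bu mulrCA [v * _]mulrC uv mulr1.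
by apply: is_idealMl; [apply: ext_ideal_ideal|apply: ext_ideal_img].
Qed.

Section PrimeDisjoint.
Variable P : A -> Prop.
Hypothesis P_prime : is_prime P.
Hypothesis P_disj : forall u, U u -> ~ P u.

Lemma loc_ideal_comap x : loc_ideal P (f x) -> P x.
Proof.
move=> [u [a [Uu Pa xua]]]; move: xua; rewrite -rmorphM => /loc_eq [w [Uw wxu]].
have [[_ _ PM] _ Pp] := P_prime.
have : P (w * (x * u)) by rewrite wxu; apply: PM.
by case/Pp => [/(P_disj Uw)|/Pp [//|/(P_disj Uu)]].
Qed.

Lemma loc_ideal_prime : is_prime (loc_ideal P).
Proof.
have [PI _ Pp] := P_prime; case: U_mult => U1 UM.
split; first exact: loc_ideal_ideal.
- move=> [u [a [Uu Pa ua]]]; move: ua; rewrite mul1r => /loc_eq [w [Uw wu]].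
  by apply: (P_disj (UM _ _ Uw Uu)); rewrite wu; apply: is_idealMl.
- move=> b b' [u [a [Uu Pa bb'u]]].
  have [s [v [Uv bv]]] := loc_frac b; have [s' [v' [Uv' b'v']]] := loc_frac b'.
  have : f (s * s' * u) = f (a * (v * v')) by rewrite !rmorphM -bv -b'v' -bb'u; ring.
  move=> /loc_eq [w [Uw wss'u]].
  have : P (w * (s * s' * u)) by rewrite wss'u mulrCA mulrC; apply: is_idealMl.
  case/Pp => [/(P_disj Uw) //|/Pp [/Pp [Ps|Ps']|/(P_disj Uu) //]].
    by left; exists v, s.
  by right; exists v', s'.
Qed.

End PrimeDisjoint.

Lemma minimal_prime_comap_loc (Q : B -> Prop) :
  is_minimal_prime Q -> is_minimal_prime (fun x => Q (f x)).
Proof.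
move=> [Qprime Qmin]; split; first exact: prime_comap.
move=> P' P'prime P'Q x Qx.
have P'disj u : U u -> ~ P' u by move=> Uu /P'Q; apply: loc_prime_unit.
apply: (loc_ideal_comap P'prime P'disj).
apply: (Qmin _ (loc_ideal_prime P'prime P'disj)) => // b [u [a [Uu P'a bu]]].
have : Q (b * f u) by rewrite bu; apply: P'Q.
by have [_ _ Qp] := Qprime; case/Qp => // /(loc_prime_unit Qprime Uu).
Qed.

Lemma minimal_prime_loc (P : A -> Prop) : is_minimal_prime P -> (forall u, U u -> ~ P u) ->
  is_minimal_prime (loc_ideal P).
Proof.
move=> [Pprime Pmin] Pdisj; split; first exact: loc_ideal_prime.
move=> Q Qprime QP b [u [a [Uu Pa bu]]].
have QfP x : Q (f x) -> P x by move=> /QP; apply: loc_ideal_comap.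
have := Pmin _ (prime_comap f Qprime) QfP a Pa; rewrite -bu.
by have [_ _ Qp] := Qprime; case/Qp => // /(loc_prime_unit Qprime Uu).
Qed.

End Localization.

Section Trace.
Variables (D S : idomainType) (j : {rmorphism D -> S}).
Hypothesis j_inj : injective j.

Fixpoint jspan (l : seq S) : S -> Prop :=
  if l is h :: l' then fun x => exists d s, jspan l' s /\ x = j d * h + s
  else fun x => exists d, x = j d.

Lemma jspan_img l d : jspan l (j d).
Proof.
elim: l d => [|h l IHl] d /=; first by exists d.
by exists 0, (j d); rewrite rmorph0 mul0r add0r.
Qed.

Lemma jspan1 l : jspan l 1.
Proof. by rewrite -(rmorph1 j); apply: jspan_img. Qed.

Lemma jspanD l x y : jspan l x -> jspan l y -> jspan l (x + y).
Proof.
elim: l x y => [|h l IHl] x y /=.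
  by move=> [d1 ->] [d2 ->]; exists (d1 + d2); rewrite rmorphD.
move=> [d1 [s1 [s1l ->]]] [d2 [s2 [s2l ->]]]; exists (d1 + d2), (s1 + s2).
by rewrite rmorphD; split; [apply: IHl|ring].
Qed.

Lemma jspanZ l c x : jspan l x -> jspan l (j c * x).
Proof.
elim: l x => [|h l IHl] x /=; first by move=> [d ->]; exists (c * d); rewrite rmorphM.
move=> [d [s [sl ->]]]; exists (c * d), (j c * s).
by rewrite rmorphM; split; [apply: IHl|ring].
Qed.

Lemma jspanB l x y : jspan l x -> jspan l y -> jspan l (x - y).
Proof. by move=> xl yl; rewrite -mulN1r -(rmorphN1 j) in yl *; apply/jspanD/jspanZ. Qed.

Definition D_linear_on (N : S -> Prop) (phi : S -> D) :=
  (forall x y, N x -> N y -> phi (x + y) = phi x + phi y) /\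
  (forall c x, N x -> phi (j c * x) = c * phi x).

Lemma jspan_nil_functional : exists phi, D_linear_on (jspan [::]) phi /\ phi 1 != 0.
Proof.
pose phi x := epsilon (inhabits (0 : D)) (fun d => x = j d).
have phiE d : phi (j d) = d.
  apply: j_inj; apply: esym; apply: (epsilon_spec (inhabits (0 : D)) (fun d' => j d = j d')).
  by exists d.
exists phi; split; last by rewrite -(rmorph1 j) phiE oner_neq0.
by split=> [_ _ [d1 ->] [d2 ->]|c _ [d ->]]; rewrite -?rmorphD -?rmorphM !phiE.
Qed.

Section JspanCons.
Variables (l : seq S) (h : S) (phi : S -> D).
Hypothesis phi_lin : D_linear_on (jspan l) phi.
Hypothesis phi1 : phi 1 != 0.

(* If [j d * h] already lies in [jspan l], multiplying by [j d] maps [jspan (h :: l)] into it. *)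
Lemma jspan_cons_functional_dependent d : d != 0 -> jspan l (j d * h) ->
  exists phi', D_linear_on (jspan (h :: l)) phi' /\ phi' 1 != 0.
Proof.
move=> d0 dh; have [phiD phiZ] := phi_lin.
have mul_d x : jspan (h :: l) x -> jspan l (j d * x).
  move=> [d' [s [sl ->]]]; rewrite mulrDr mulrCA; apply: jspanD; exact: jspanZ.
exists (fun x => phi (j d * x)); split; last by rewrite phiZ; [apply: mulf_neq0|apply: jspan1].
split=> [x y xl yl|c x xl]; first by rewrite mulrDr phiD //; apply: mul_d.
by rewrite mulrCA [LHS]phiZ //; apply: mul_d.
Qed.

(* Otherwise [x = j d * h + s] determines [s], and [phi] is applied to that [s]. *)
Lemma jspan_cons_functional_free : ~ (exists d, d != 0 /\ jspan l (j d * h)) ->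
  exists phi', D_linear_on (jspan (h :: l)) phi' /\ phi' 1 != 0.
Proof.
move=> free; have [phiD phiZ] := phi_lin.
have decomp_uniq d1 d2 s1 s2 : jspan l s1 -> jspan l s2 ->
    j d1 * h + s1 = j d2 * h + s2 -> s1 = s2.
  move=> s1l s2l e; suff d12 : d1 = d2 by subst d2; apply: (addrI (j d1 * h)).
  apply/eqP; rewrite -subr_eq0; apply: contraT => d12; case: free; exists (d1 - d2).
  have s2E : s2 = j d1 * h + s1 - j d2 * h by rewrite e; ring.
  have -> : j (d1 - d2) * h = s2 - s1 by rewrite s2E rmorphB; ring.
  by split=> //; apply: jspanB.
pose tail x := epsilon (inhabits (0 : S)) (fun s => jspan l s /\ exists d, x = j d * h + s).
have tailP x : jspan (h :: l) x -> jspan l (tail x) /\ exists d, x = j d * h + tail x.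
  move=> [d [s [sl e]]]; apply: (epsilon_spec (inhabits (0 : S)) (fun s => jspan l s /\ _)).
  by exists s; split=> //; exists d.
have tailE x d s : jspan l s -> x = j d * h + s -> tail x = s.
  move=> sl e; have [tl [d' e']] := tailP x (ex_intro _ d (ex_intro _ s (conj sl e))).
  exact: decomp_uniq tl sl (etrans (esym e') e).
exists (fun x => phi (tail x)); split; last first.
  by rewrite (tailE 1 0 1) ?rmorph0 ?mul0r ?add0r //; apply: jspan1.
split=> [x y xl yl|c x xl].
  have [txl [dx ex]] := tailP x xl; have [tyl [dy ey]] := tailP y yl.
  rewrite (tailE (x + y) (dx + dy) (tail x + tail y)) ?phiD //; first exact: jspanD.
  by rewrite {1}ex {1}ey rmorphD; ring.
have [txl [dx ex]] := tailP x xl.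
rewrite (tailE (j c * x) (c * dx) (j c * tail x)) ?phiZ //; first exact: jspanZ.
by rewrite {1}ex rmorphM; ring.
Qed.

End JspanCons.

Lemma jspan_functional l : exists phi, D_linear_on (jspan l) phi /\ phi 1 != 0.
Proof.
elim: l => [|h l [phi [phi_lin phi1]]]; first exact: jspan_nil_functional.
have [[d [d0 dh]]|free] := classic (exists d, d != 0 /\ jspan l (j d * h)).
  exact: (jspan_cons_functional_dependent phi_lin phi1 d0 dh).
exact: jspan_cons_functional_free phi_lin phi1 free.
Qed.

Lemma module_finite_jspan gens :
  (forall x, exists cs : seq D, x = \sum_(i < size gens) j (nth 0 cs i) * nth 0 gens i) ->
  forall x, jspan gens x.
Proof.
move=> gens_span x; have [cs ->] := gens_span x.
elim: gens cs {gens_span} => [|h l IHl] cs /=; first by rewrite big_ord0; exists 0; rewrite rmorph0.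
rewrite big_ord_recl; exists (nth 0 cs 0), (\sum_(i < size l) j (nth 0 (behead cs) i) * nth 0 l i).
split; first exact: IHl.
by congr (_ + _); apply: eq_bigr => i _; case: cs => [|c cs]; rewrite /= ?nth_nil.
Qed.

(* Stands in for the trace of the extension. *)
Lemma module_finite_functional : module_finite j ->
  exists phi : S -> D, [/\ forall x y, phi (x + y) = phi x + phi y,
    forall c x, phi (j c * x) = c * phi x & phi 1 != 0].
Proof.
move=> [gens /module_finite_jspan gens_span].
have [phi [[phiD phiZ] phi1]] := jspan_functional gens.
by exists phi; split=> // [x y|c x]; [apply: phiD|apply: phiZ].
Qed.

End Trace.

Local Notation "x %:F" := (@FracField.tofrac _ x).

(* The localization of a domain at a multiplicative set avoiding 0, as a subring of its
   fraction field.  Denominators are products of lists of elements of [V] so that the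
   subring, and hence its ring structure, does not depend on the hypotheses on [V]. *)
Section FractionLocalization.
Variables (S : idomainType) (V : S -> Prop).

Definition V_denoms (l : seq S) := {in l, forall v, V v /\ v != 0}.

Definition loc_fracb (x : {fraction S}) : bool :=
  classic_bool (exists s l, V_denoms l /\ x = s%:F / (\prod_(v <- l) v)%:F).

Lemma loc_fracbP x :
  reflect (exists s l, V_denoms l /\ x = s%:F / (\prod_(v <- l) v)%:F) (loc_fracb x).
Proof. exact: classic_boolP. Qed.

Lemma V_denoms_cat l1 l2 : V_denoms l1 -> V_denoms l2 -> V_denoms (l1 ++ l2).
Proof. by move=> l1V l2V v; rewrite mem_cat => /orP[/l1V|/l2V]. Qed.

Lemma V_denoms_prod_neq0 l : V_denoms l -> (\prod_(v <- l) v)%:F != 0.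
Proof.
move=> lV; rewrite tofrac_eq0 big_seq.
by apply: (big_ind (fun x => x != 0)) => [|x y|v /lV []]; [apply: oner_neq0|apply: mulf_neq0|].
Qed.

Lemma loc_fracb_subring : subring_closed loc_fracb.
Proof.
split.
- by apply/loc_fracbP; exists 1, [::]; rewrite big_nil divr1.
- move=> x y /loc_fracbP [s1 [l1 [l1V ->]]] /loc_fracbP [s2 [l2 [l2V ->]]].
  apply/loc_fracbP; exists (s1 * \prod_(v <- l2) v - s2 * \prod_(v <- l1) v), (l1 ++ l2).
  split; first exact: V_denoms_cat.
  by rewrite -mulNr addf_div ?V_denoms_prod_neq0 // big_cat rmorphB !rmorphM mulNr.
- move=> x y /loc_fracbP [s1 [l1 [l1V ->]]] /loc_fracbP [s2 [l2 [l2V ->]]].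
  apply/loc_fracbP; exists (s1 * s2), (l1 ++ l2); split; first exact: V_denoms_cat.
  by rewrite mulf_div big_cat !rmorphM.
Qed.

Record frac_loc := FracLoc { frac_loc_val : {fraction S}; frac_loc_valP : loc_fracb frac_loc_val }.
HB.instance Definition _ := [isSub for frac_loc_val].
HB.instance Definition _ := [Choice of frac_loc by <:].
HB.instance Definition _ := GRing.SubChoice_isSubComNzRing.Build _ _ frac_loc loc_fracb_subring.

Lemma loc_fracb_tofrac s : loc_fracb s%:F.
Proof. by apply/loc_fracbP; exists s, [::]; rewrite big_nil rmorph1 divr1. Qed.

Definition to_frac_loc (s : S) : frac_loc := FracLoc (loc_fracb_tofrac s).

Lemma to_frac_loc_zmod : zmod_morphism to_frac_loc.
Proof. by move=> x y; apply: val_inj; rewrite /= rmorphB. Qed.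

Lemma to_frac_loc_monoid : monoid_morphism to_frac_loc.
Proof. by split=> [|x y]; apply: val_inj; rewrite /= ?rmorph1 ?rmorphM. Qed.

HB.instance Definition _ := GRing.isZmodMorphism.Build S frac_loc to_frac_loc to_frac_loc_zmod.
HB.instance Definition _ := GRing.isMonoidMorphism.Build S frac_loc to_frac_loc to_frac_loc_monoid.

Lemma to_frac_loc_inj : injective to_frac_loc.
Proof. by move=> x y /(congr1 val) /= /eqP; rewrite tofrac_eq => /eqP. Qed.

Lemma frac_loc_mul_eq0 (a b : frac_loc) : a * b = 0 -> a = 0 \/ b = 0.
Proof.
move=> /(congr1 val) /= /eqP; rewrite mulf_eq0 => /orP[] /eqP ab0; [left|right];
  by apply: val_inj.
Qed.

Lemma to_frac_loc_localization :
  mult_system V -> (forall v, V v -> v != 0) -> is_localization V to_frac_loc.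
Proof.
move=> [V1 VM] V_neq0; split.
- move=> v Vv; have inv_v : loc_fracb (1%:F / v%:F).
    apply/loc_fracbP; exists 1, [:: v]; rewrite big_seq1; split=> // _ /[!inE] /eqP ->.
    by split; last exact: V_neq0.
  exists (FracLoc inv_v); apply: val_inj; rewrite /= rmorph1 mul1r divff //.
  by rewrite tofrac_eq0 V_neq0.
- move=> [x xloc]; have /loc_fracbP [s [l [lV xsl]]] := xloc.
  exists s, (\prod_(v <- l) v); split.
    by rewrite big_seq; apply: big_ind => // v /lV [].
  by apply: val_inj; rewrite /= xsl divfK ?V_denoms_prod_neq0.
- move=> a; rewrite -(rmorph0 to_frac_loc) => /to_frac_loc_inj ->.
  by exists 1; rewrite mulr0.
Qed.

End FractionLocalization.

(* The image of [x] in [R/P] is in the tight closure of [I (R/P)], witnessed for every [q]. *)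
Definition tc_mod (R : comPzRingType) (p : nat) (I P : R -> Prop) (x : R) :=
  exists c, ~ P c /\
    forall e, exists y, frob_power I (p ^ e) y /\ P (c * x ^+ (p ^ e) - y).

Lemma tc_modMl (R : comPzRingType) p (I P : R -> Prop) r x :
  is_prime P -> tc_mod p I P x -> tc_mod p I P (r * x).
Proof.
move=> [PI _ _] [c [Pc cx]]; exists c; split=> // e; have [y [Iy Py]] := cx e.
exists (r ^+ (p ^ e) * y); split; first exact: is_idealMl (frob_power_ideal _ _) Iy.
by rewrite exprMn mulrCA -mulrBr; apply: is_idealMl.
Qed.

Section ModuleFiniteCover.
Variables (R : comNzRingType) (p : nat) (P : R -> Prop).
Variables (D S : idomainType) (pi : {rmorphism R -> D}) (j : {rmorphism D -> S}).
Hypothesis pR : p \in [pchar R].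
Hypothesis pi_quot : is_quotient_by P pi.
Hypothesis j_inj : injective j.

Let psi : {rmorphism R -> S} := (j \o pi)%FUN.

Lemma cover_eq0 x : psi x = 0 <-> P x.
Proof.
rewrite -pi_quot.2 /psi /=; split=> [|->]; last exact: rmorph0.
by rewrite -(rmorph0 j) => /j_inj.
Qed.

Lemma functional_ext_ideal (phi : S -> D) (J : R -> Prop) s :
  (forall x y, phi (x + y) = phi x + phi y) -> (forall c x, phi (j c * x) = c * phi x) ->
  is_ideal J -> ext_ideal psi J s -> exists y, J y /\ phi s = pi y.
Proof.
move=> phiD phiZ JI [l [lJ ->]]; elim: l lJ => [|[r g] l IHl] lJ.
  have phi0 : phi 0 = 0 by apply/(addrI (phi 0)); rewrite -phiD !addr0.
  by exists 0; rewrite big_nil phi0 rmorph0; split=> //; apply: is_ideal0.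
have [y [Jy phil]] := IHl (fun rg rgl => lJ rg (mem_behead (s := (r, g) :: l) rgl)).
have [z [Jz /= ->]] := lJ (r, g) (mem_head _ _).
have [t pit] := pi_quot.1 (phi r).
exists (t * z + y); split; first by apply: is_idealD => //; apply: is_idealMl.
by rewrite big_cons phiD phil /= mulrC phiZ -pit -!rmorphM -rmorphD mulrC.
Qed.

Hypothesis j_finite : module_finite j.

(* Applying a D-linear [phi] with [phi 1 = pi c] to [(psi x)^q] in [I^[q] S] gives the witness. *)
Lemma cover_tc_mod (I : R -> Prop) x : is_ideal I -> ext_ideal psi I (psi x) -> tc_mod p I P x.
Proof.
move=> II Ix; have [phi [phiD phiZ phi1]] := module_finite_functional j_inj j_finite.
have [c pic] := pi_quot.1 (phi 1); exists c; split.
  by move=> /pi_quot.2; rewrite pic => /eqP; rewrite (negbTE phi1).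
move=> e; have pS : p \in [pchar S] := rmorph_pchar j (rmorph_pchar pi pR).
have Ixq : ext_ideal psi (frob_power I (p ^ e)) (psi x ^+ (p ^ e)).
  apply: gen_ideal_mono (gen_ideal_frob pS e Ix) => _ [_ [[z [Iz ->]] ->]].
  by exists (z ^+ (p ^ e)); rewrite rmorphXn; split=> //; apply: frob_power_gen.
have [y [Iy phiy]] := functional_ext_ideal phiD phiZ (frob_power_ideal I _) Ixq.
exists y; split=> //; apply/pi_quot.2; apply/eqP; rewrite rmorphB subr_eq0 -phiy.
by rewrite -rmorphXn -[psi _]mulr1 /psi /= phiZ rmorphM pic mulrC.
Qed.

Hypothesis S_freg : F_regular p S.

(* In the localization of [S] at [psi U] the image of [a] is in the tight closure of
   [I], hence in the extended ideal by F-regularity; then clear the denominator. *)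
Lemma cover_fregular_step (U I : R -> Prop) a c e0 :
  mult_system U -> (forall u, U u -> ~ P u) -> is_ideal I -> ~ P c ->
  (forall e, (e0 <= e)%N -> exists w, U w /\ frob_power I (p ^ e) (w * c * a ^+ (p ^ e))) ->
  exists u, U u /\ ext_ideal psi I (psi (u * a)).
Proof.
move=> [U1 UM] Udisj II Pc ca.
pose V s := exists u, U u /\ s = psi u.
have V_mult : mult_system V.
  split; first by exists 1; rewrite rmorph1.
  by move=> _ _ [u [Uu ->]] [v [Uv ->]]; exists (u * v); rewrite rmorphM; split=> //; apply: UM.
have V_neq0 v : V v -> v != 0 by move=> [u [Uu ->]]; apply/eqP => /cover_eq0; apply: Udisj.
pose g := @to_frac_loc S V.
have g_loc : is_localization V g := to_frac_loc_localization V_mult V_neq0.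
have Ja : ext_ideal g (ext_ideal psi I) (g (psi a)).
  apply: (S_freg V_mult g_loc (ext_ideal_ideal g _) _).1; exists (g (psi c)); split.
    move=> Q /(minimal_prime_eq0 (@frac_loc_mul_eq0 _ V)) Q0 /Q0.
    by rewrite -(rmorph0 g) => /to_frac_loc_inj /cover_eq0.
  exists e0 => e le; have [w [Uw wca]] := ca e le.
  have [v wv] : exists v, g (psi w) * v = 1 by case: g_loc => unit _ _; apply: unit; exists w.
  have := is_idealMr v (frob_power_ideal _ _) (frob_power_map g (frob_power_map psi wca)).
  by rewrite !rmorphM !rmorphXn mulrAC [g (psi w) * _ * v]mulrAC wv mul1r.
have [_ [s [[u [Uu ->]] Is]]] := (ext_idealE_loc V_mult g_loc _ (ext_ideal_ideal psi I)).1 Ja.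
rewrite -rmorphM => /to_frac_loc_inj psiau.
by exists u; rewrite rmorphM mulrC psiau.
Qed.

End ModuleFiniteCover.

Lemma cover_tc_mod_multiple (R : comNzRingType) p (P U I : R -> Prop) a c e0 :
  p \in [pchar R] -> mult_system U -> is_ideal I ->
  (exists (D : idomainType) (pi : {rmorphism R -> D}), is_quotient_by P pi /\
     exists (S : idomainType) (j : {rmorphism D -> S}),
       injective j /\ module_finite j /\ F_regular p S) ->
  ((forall u, U u -> ~ P u) -> ~ P c) ->
  (forall e, (e0 <= e)%N -> exists w, U w /\ frob_power I (p ^ e) (w * c * a ^+ (p ^ e))) ->
  exists u, U u /\ tc_mod p I P (u * a).
Proof.
move=> pR U_mult II [D [pi [pi_quot [S [j [j_inj [j_finite S_freg]]]]]]] Pc ca.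
have [[u [Uu Pu]]|Umeets] := classic (exists u, U u /\ P u).
  exists u; split=> //; exists 1; split=> [/pi_quot.2|e].
    by rewrite rmorph1 => /eqP; rewrite oner_eq0.
  exists 0; split; first exact: is_ideal0 (frob_power_ideal _ _).
  have q_gt0 : (0 < p ^ e)%N by rewrite expn_gt0 prime_gt0 // (pcharf_prime pR).
  apply/pi_quot.2; rewrite mul1r subr0 -(prednK q_gt0) exprS !rmorphM.
  by rewrite (pi_quot.2 u).2 // !mul0r.
have Udisj u : U u -> ~ P u by move=> Uu Pu; apply: Umeets; exists u.
have [u [Uu Iua]] := cover_fregular_step pi_quot j_inj S_freg U_mult Udisj II (Pc Udisj) ca.
by exists u; split=> //; exact: (cover_tc_mod pR pi_quot j_inj j_finite II Iua).
Qed.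

Section Gluing.
Variables (R : comNzRingType) (n : nat) (M : 'I_n -> R -> Prop).
Hypothesis M_inj : injective M.
Hypothesis M_min : forall i, is_minimal_prime (M i).

Let M_prime i : is_prime (M i) := (M_min i).1.
Let M_ideal i : is_ideal (M i) := prime_is_ideal (M_prime i).

Lemma minimal_primes_separated i : exists d, ~ M i d /\ forall k, k != i -> M k d.
Proof.
have sep k : exists e, k != i -> M k e /\ ~ M i e.
  have [<-|ki] := eqVneq k i; first by exists 0.
  apply: NNPP => nosep; case/eqP: ki; apply: M_inj.
  have MkMi : forall e, M k e -> M i e.
    by move=> e Mke; apply: NNPP => nMie; apply: nosep; exists e.
  apply: functional_extensionality => e; apply: propositional_extensionality.
  by split; [apply: MkMi|exact: (M_min i).2 _ (M_prime k) MkMi e].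
pose sepf k := epsilon (inhabits (0 : R)) (fun e => k != i -> M k e /\ ~ M i e).
have sepfP k : k != i -> M k (sepf k) /\ ~ M i (sepf k) by apply: epsilon_spec (sep k).
exists (\prod_(k < n | k != i) sepf k); split.
  apply: (big_ind (fun y => ~ M i y)) => [|a b|k /sepfP []//]; first by case: (M_prime i).
  exact: prime_notinM.
move=> k ki; rewrite (bigD1 k) //=; apply: is_idealMr => //; exact: (sepfP k ki).1.
Qed.

Variables (p : nat) (I : R -> Prop) (x : R) (m : nat).
Hypothesis pR : p \in [pchar R].
Hypothesis M_nil : forall y, (forall i, M i y) -> y ^+ m = 0.
Hypothesis x_tc_mod : forall i, tc_mod p I (M i) x.

(* With [d i] separating [M i] from the other minimal primes, [c = \sum_i d i * c i] lies
   in no minimal prime, and [c x^q] differs from an element of [I^[q]] by a nilpotent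
   element, which a further Frobenius power [p^m] kills. *)
Lemma tc_mod_glue : exists c, (forall i, ~ M i c) /\
  forall e, frob_power I (p ^ (e + m)) (c * x ^+ (p ^ (e + m))).
Proof.
pose d i := sval (constructive_indefinite_description _ (minimal_primes_separated i)).
have dP i : ~ M i (d i) /\ forall k, k != i -> M k (d i).
  exact: svalP (constructive_indefinite_description _ (minimal_primes_separated i)).
pose cf i := sval (constructive_indefinite_description _ (x_tc_mod i)).
have cfP i : ~ M i (cf i) /\
    forall e, exists y, frob_power I (p ^ e) y /\ M i (cf i * x ^+ (p ^ e) - y).
  exact: svalP (constructive_indefinite_description _ (x_tc_mod i)).
pose c := \sum_(i < n) d i * cf i.
have sum_others k (F : 'I_n -> R) : M k (\sum_(i < n | i != k) d i * F i).
  apply: (is_ideal_sum (M_ideal k)) => i _ ik.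
  by apply: (is_idealMr _ (M_ideal k)); apply: (dP i).2; rewrite eq_sym.
exists (c ^+ (p ^ m)); split.
  move=> k /(prime_expr (M_prime k)); rewrite /c (bigD1 k) //= => Mc.
  have : M k (d k * cf k).
    by rewrite -(addrK (\sum_(i < n | i != k) d i * cf i) (d k * cf k)); apply: is_idealB.
  by apply: prime_notinM (dP k).1 (cfP k).1.
move=> e; pose y i := sval (constructive_indefinite_description _ ((cfP i).2 e)).
have yP i : frob_power I (p ^ e) (y i) /\ M i (cf i * x ^+ (p ^ e) - y i).
  exact: svalP (constructive_indefinite_description _ ((cfP i).2 e)).
pose Y := \sum_(i < n) d i * y i.
have diff_in k : M k (c * x ^+ (p ^ e) - Y).
  have -> : c * x ^+ (p ^ e) - Y = \sum_(i < n) d i * (cf i * x ^+ (p ^ e) - y i).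
    by rewrite /c /Y mulr_suml -sumrB; apply: eq_bigr => i _; rewrite mulrBr mulrA.
  rewrite (bigD1 k) //=; apply: (is_idealD (M_ideal k)); last exact: sum_others.
  exact: (is_idealMl _ (M_ideal k) (yP k).2).
have nil : (c * x ^+ (p ^ e) - Y) ^+ (p ^ m) = 0.
  have m_le : (m <= p ^ m)%N by apply/ltnW/ltn_expl/prime_gt1/(pcharf_prime pR).
  by rewrite -(subnK m_le) exprD M_nil ?mulr0.
rewrite expnD exprM -(expnD _ e) -exprMn -[c * _](subrK Y) frobD // nil add0r.
apply: frob_power_frob => //; apply: is_ideal_sum => [|i _ _]; first exact: frob_power_ideal.
by apply: is_idealMl; [apply: frob_power_ideal|apply: (yP i).1].
Qed.

End Gluing.

Lemma tc_of_tc_mod_minimal_primes (R : comNzRingType) p (I : R -> Prop) x :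
  p \in [pchar R] -> is_noetherian R ->
  (forall P, is_minimal_prime P -> tc_mod p I P x) -> tight_closure p I x.
Proof.
move=> pR noethR xtc.
have [n [M [M_inj M_min M_cover [m M_nil]]]] := noetherian_minimal_primes noethR.
have [c [Mc cx]] := tc_mod_glue M_inj M_min pR M_nil (fun i => xtc _ (M_min i)).
exists c; split; first by move=> P /M_cover [i ->].
by exists m => e /subnK <-; apply: cx.
Qed.

Lemma tc_mod_common_multiplier (R : comNzRingType) p (I U : R -> Prop) a :
  is_noetherian R -> mult_system U ->
  (forall P, is_minimal_prime P -> exists u, U u /\ tc_mod p I P (u * a)) ->
  exists u, U u /\ forall P, is_minimal_prime P -> tc_mod p I P (u * a).
Proof.
move=> noethR [U1 UM] ua.
have [n [M [_ M_min M_cover _]]] := noetherian_minimal_primes noethR.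
pose u i := sval (constructive_indefinite_description _ (ua _ (M_min i))).
have uP i : U (u i) /\ tc_mod p I (M i) (u i * a).
  exact: svalP (constructive_indefinite_description _ (ua _ (M_min i))).
exists (\prod_(i < n) u i); split; first by apply: big_ind => // i _; apply: (uP i).1.
move=> P /M_cover [i ->]; rewrite (bigD1 i) //= [u i * _]mulrC -mulrA.
exact: tc_modMl (M_min i).1 (uP i).2.
Qed.

Lemma tight_closure_ideal (R : comNzRingType) p (I : R -> Prop) :
  p \in [pchar R] -> is_ideal I -> is_ideal (tight_closure p I).
Proof.
move=> pR II; have Iq_ideal e := frob_power_ideal I (p ^ e).
split.
- exists 1; split; first by move=> P [[_ P1 _] _].
  by exists 0%N => e _; rewrite mul1r; apply: frob_power_gen; apply: is_ideal0.
- move=> x y [c1 [c1P [e1 c1x]]] [c2 [c2P [e2 c2y]]]; exists (c1 * c2); split.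
    by move=> P Pmin; apply: prime_notinM; [case: Pmin|apply: c1P|apply: c2P].
  exists (maxn e1 e2) => e; rewrite geq_max => /andP[e1e e2e].
  rewrite (frobD pR) mulrDr; apply: is_idealD => //.
    by rewrite mulrAC; apply: is_idealMr => //; apply: c1x.
  by rewrite -mulrA mulrC; apply: is_idealMr => //; apply: c2y.
- move=> r x [c [cP [e0 cx]]]; exists c; split=> //; exists e0 => e e0e.
  by rewrite exprMn mulrCA; apply: is_idealMl => //; apply: cx.
Qed.

Section LocalizationOfTightClosure.
Variables (R : comNzRingType) (p : nat) (B : comPzRingType).
Variables (U I : R -> Prop) (f : {rmorphism R -> B}).
Hypothesis pR : p \in [pchar R].
Hypothesis II : is_ideal I.
Hypothesis U_mult : mult_system U.
Hypothesis f_loc : is_localization U f.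

Lemma ext_tc_sub_tc_ext z :
  ext_ideal f (tight_closure p I) z -> tight_closure p (ext_ideal f I) z.
Proof.
move=> /(ext_idealE_loc U_mult f_loc _ (tight_closure_ideal pR II)).
move=> [u [a [Uu [c [cP [e0 ca]]] za]]]; exists (f c); split.
  by move=> Q Qmin; apply: cP (minimal_prime_comap_loc U_mult f_loc Qmin).
exists e0 => e e0e; have [v uv] := loc_unit f_loc Uu.
have -> : z = v * f a by rewrite -za mulrCA [v * _]mulrC uv mulr1.
rewrite exprMn mulrCA -rmorphXn -rmorphM.
exact: is_idealMl (frob_power_ideal _ _) (frob_power_map f (ca e e0e)).
Qed.

Lemma frob_power_ext_loc q y :
  frob_power (ext_ideal f I) q y -> ext_ideal f (frob_power I q) y.
Proof.
apply: gen_ideal_min; first exact: ext_ideal_ideal.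
move=> _ [y' [/(ext_idealE_loc U_mult f_loc _ II) [u [x [Uu Ix y'u]]] ->]].
apply/(ext_idealE_loc U_mult f_loc _ (frob_power_ideal I q)); exists (u ^+ q), (x ^+ q).
split; [|exact: frob_power_gen|by rewrite !rmorphXn -exprMn y'u].
by elim: q => [|q IHq]; [case: U_mult|rewrite exprS; apply: U_mult.2].
Qed.

(* Clearing the denominators of [z = f a / f u0] and of the multiplier of [z]. *)
Lemma tc_ext_numerator z a u0 : U u0 -> z * f u0 = f a ->
  tight_closure p (ext_ideal f I) z ->
  exists c e0, (forall P, is_minimal_prime P -> (forall u, U u -> ~ P u) -> ~ P c) /\
    forall e, (e0 <= e)%N -> exists w, U w /\ frob_power I (p ^ e) (w * c * a ^+ (p ^ e)).
Proof.
move=> Uu0 za [cB [cBP [e0 cBz]]]; have [c [v [Uv cBv]]] := loc_frac f_loc cB.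
exists c, e0; split.
  move=> P Pmin Pdisj Pc; apply: cBP (minimal_prime_loc U_mult f_loc Pmin Pdisj) _.
  by exists v, c.
move=> e e0e; set q := (p ^ e)%N.
have [u' [a' [Uu' Ia' a'u']]] := (ext_idealE_loc U_mult f_loc _ (frob_power_ideal I q)).1
  (frob_power_ext_loc (cBz e e0e)).
have : f (c * a ^+ q * u') = f (a' * v * u0 ^+ q).
  by rewrite !rmorphM !rmorphXn -cBv -za -a'u' exprMn; ring.
move=> /(loc_eq f_loc) [w [Uw wcau']]; exists (w * u'); split; first exact: U_mult.2.
have -> : w * u' * c * a ^+ q = w * (c * a ^+ q * u') by ring.
by rewrite wcau' mulrC -!mulrA; apply: is_idealMr (frob_power_ideal _ _) Ia'.
Qed.

End LocalizationOfTightClosure.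

Theorem mainTheorem5 (p : nat) (R : comNzRingType) :
  p \in [pchar R] -> is_noetherian R ->
  (forall P : R -> Prop, is_minimal_prime P ->
     exists (D : idomainType) (pi : {rmorphism R -> D}),
       is_quotient_by P pi /\
       exists (S : idomainType) (j : {rmorphism D -> S}),
         injective j /\ module_finite j /\ F_regular p S) ->
  tc_commutes_with_localization p R.
Proof.
move=> pR noethR cover I II U B f U_mult f_loc z; split.
  exact: (ext_tc_sub_tc_ext pR II U_mult f_loc).
move=> ztc; have [a [u0 [Uu0 za]]] := loc_frac f_loc z.
have [c [e0 [cP ca]]] := tc_ext_numerator II U_mult f_loc Uu0 za ztc.
have [u [Uu uatc]] : exists u, U u /\ forall P, is_minimal_prime P -> tc_mod p I P (u * a).
  apply: (tc_mod_common_multiplier noethR U_mult) => P Pmin.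
  exact: cover_tc_mod_multiple pR U_mult II (cover P Pmin) (cP P Pmin) ca.
apply/(ext_idealE_loc U_mult f_loc _ (tight_closure_ideal pR II)).
exists (u0 * u), (u * a); split; first exact: U_mult.2.
  exact: tc_of_tc_mod_minimal_primes pR noethR uatc.
by rewrite rmorphM mulrA za -rmorphM mulrC.
Qed.
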